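(* Let $\mathbb F$ be a field that is not the field with two elements. Let $V\subset\mathbb F^{n\times n}$ and $V'\subset\mathbb F^{n'\times n'}$ be vector spaces of pairwise commuting matrices, each containing a nonsingular matrix. Then the following are equivalent: (i) the Lie algebras $\mathrm L(V)$ and $\mathrm L(V')$ are isomorphic; (ii) $n=n'$ and $SVS^{-1}=V'$ for some nonsingular $S\in\mathbb F^{n\times n}$; (iii) $n=n'$ and $R\widetilde V R^{-1}=\widetilde{V'}$ for some nonsingular $R\in\mathbb F^{(n+1)\times(n+1)}$.
   Context: For a vector space $V\subset\mathbb F^{n\times n}$ of commuting matrices, $\widetilde V$ denotes the vector space of all $(n+1)\times(n+1)$ matrices $(A|a):=\begin{bmatrix}A&a\\0&0\end{bmatrix}$ with $A\in V$, $a\in\mathbb F^n$ (a column), and zero last row. $\mathrm L(V)$ is the Lie algebra $\widetilde V$ with bracket $[u,v]=uv-vu$, i.e. $[(A|a),(B|b)]=(0\,|\,Ab-Ba)$. *)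

From HB Require Import structures.
From mathcomp Require Import all_boot all_order all_algebra.
Set Implicit Arguments. Unset Strict Implicit. Unset Printing Implicit Defensive.
Import GRing.Theory.
Local Open Scope ring_scope.

Definition commuting_space (F : fieldType) (n : nat) (V : {vspace 'M[F]_n}) :=
  {in V &, forall A B : 'M[F]_n, A *m B = B *m A}.

Definition has_nonsingular (F : fieldType) (n : nat) (V : {vspace 'M[F]_n}) :=
  exists2 A : 'M[F]_n, A \in V & A \in unitmx.

(* Membership in V~ : matrices (A|a) = [A a; 0 0] with A in V, a arbitrary,
   last row zero. *)
Definition in_tilde (F : fieldType) (n : nat) (V : {vspace 'M[F]_n})
  (M : 'M[F]_(n + 1)) : Prop :=
  ulsubmx M \in V /\ dlsubmx M = 0 /\ drsubmx M = 0.

Definition lie_br (F : fieldType) (m : nat) (u v : 'M[F]_m) : 'M[F]_m :=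
  u *m v - v *m u.

(* L(V) and L(V') are isomorphic Lie algebras: there is a linear map which
   restricts to a bijection V~ -> V'~ preserving the bracket. *)
Definition lie_isomorphic (F : fieldType) (n n' : nat)
  (V : {vspace 'M[F]_n}) (V' : {vspace 'M[F]_n'}) : Prop :=
  exists f : {linear 'M[F]_(n + 1) -> 'M[F]_(n' + 1)},
    [/\ forall x, in_tilde V x -> in_tilde V' (f x),
        forall x y, in_tilde V x -> in_tilde V y -> f x = f y -> x = y,
        forall y, in_tilde V' y -> exists2 x, in_tilde V x & f x = y
      & forall x y, in_tilde V x -> in_tilde V y ->
          f (lie_br x y) = lie_br (f x) (f y)].

Definition similar_spaces (F : fieldType) (n n' : nat)
  (V : {vspace 'M[F]_n}) (V' : {vspace 'M[F]_n'}) : Prop :=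
  exists e : n = n',
  exists2 S : 'M[F]_n', S \in unitmx &
    forall B : 'M[F]_n',
      B \in V' <-> exists2 A : 'M[F]_n, A \in V &
                    B = S *m castmx (e, e) A *m invmx S.

Definition similar_tildes (F : fieldType) (n n' : nat)
  (V : {vspace 'M[F]_n}) (V' : {vspace 'M[F]_n'}) : Prop :=
  exists e : n = n',
  exists2 R : 'M[F]_(n' + 1), R \in unitmx &
    forall N : 'M[F]_(n' + 1),
      in_tilde V' N <-> exists2 M : 'M[F]_(n + 1), in_tilde V M &
          N = R *m castmx (congr1 (addn^~ 1%N) e, congr1 (addn^~ 1%N) e) M
                *m invmx R.

From HB Require Import structures.
From mathcomp Require Import all_boot all_order all_algebra.
Set Implicit Arguments. Unset Strict Implicit. Unset Printing Implicit Defensive.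
Import GRing.Theory.
Local Open Scope ring_scope.

(* Since V contains a nonsingular matrix, the derived algebra [L(V), L(V)] is
   the ideal of all (0|b); as V is commutative, L(V) acts on it through V.  A
   Lie isomorphism f preserves this ideal, where it is given by a nonsingular
   matrix S, and comparing f [(A|0), (0|b)] with [f (A|0), f (0|b)] shows that
   the V'-part of f (A|0) is S A S^-1.  Conversely, conjugation by a
   nonsingular S lifts to conjugation by diag(S, 1) on the tilde spaces. *)

Section ColumnMaps.
Variable F : fieldType.

Lemma mulmx_deltaP {m k : nat} (M N : 'M[F]_(k, m)) :
  (forall j, M *m delta_mx j 0 = N *m delta_mx j 0 :> 'cV_k) -> M = N.
Proof.
move=> MN; apply/matrixP => i j.
by move/matrixP/(_ i 0): (MN j); rewrite -!colE !mxE.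
Qed.

Definition cV_mx {m k : nat} (T : 'cV[F]_m -> 'cV[F]_k) : 'M[F]_(k, m) :=
  \matrix_(i, j) T (delta_mx j 0) i 0.

Lemma cV_mxE {m k : nat} (T : 'cV[F]_m -> 'cV[F]_k) :
  {morph T : x y / x + y} -> (forall a, {morph T : x / a *: x}) ->
  forall b, T b = cV_mx T *m b.
Proof.
move=> TD TZ b; have T0 : T 0 = 0 by rewrite -(scale0r 0) TZ scale0r.
have colT j : cV_mx T *m delta_mx j 0 = T (delta_mx j 0).
  by apply/matrixP => i l; rewrite -colE !mxE (ord1 l).
rewrite [b]matrix_sum_delta (big_morph T TD T0) linear_sum /=.
by apply: eq_bigr => i _; rewrite big_ord1 TZ linearZ /= colT.
Qed.

Lemma mx_cV_surj_rinv {m k : nat} (S : 'M[F]_(k, m)) :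
  (forall c : 'cV_k, exists b, S *m b = c) -> exists B : 'M_(m, k), S *m B = 1%:M.
Proof.
move=> surjS; have surjSb (c : 'cV_k) : exists b, S *m b == c.
  by have [b <-] := surjS c; exists b.
pose b (j : 'I_k) := xchoose (surjSb (delta_mx j 0)).
exists (\matrix_(i, j) b j i 0); apply: mulmx_deltaP => j.
rewrite mul1mx -mulmxA -colE -[RHS](eqP (xchooseP (surjSb (delta_mx j 0)))).
congr (S *m _).
by apply/matrixP => i l; rewrite (ord1 l) !mxE.
Qed.

Lemma mx_cV_bij_dim {m k : nat} (S : 'M[F]_(k, m)) :
  (forall b : 'cV_m, S *m b = 0 -> b = 0) ->
  (forall c : 'cV_k, exists b, S *m b = c) -> m = k.
Proof.
move=> injS /mx_cV_surj_rinv [B SB].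
have BS : B *m S = 1%:M.
  apply/eqP; rewrite -subr_eq0; apply/eqP/mulmx_deltaP => j; rewrite mul0mx.
  by apply: injS; rewrite !mulmxA mulmxBr mulmxA SB mul1mx mulmx1 subrr mul0mx.
apply/eqP; rewrite eqn_leq.
rewrite -{1}(mxrank1 F m) -BS mulmx_max_rank.
by rewrite -{1}(mxrank1 F k) -SB mulmx_max_rank.
Qed.

End ColumnMaps.

Section Tilde.
Variables (F : fieldType) (n : nat) (V : {vspace 'M[F]_n}).

Lemma in_tilde_block (A : 'M[F]_n) (a : 'cV[F]_n) :
  A \in V -> in_tilde V (block_mx A a 0 0).
Proof. by move=> AV; rewrite /in_tilde block_mxKul block_mxKdl block_mxKdr. Qed.

Lemma in_tildeP (M : 'M[F]_(n + 1)) :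
  in_tilde V M -> exists2 A, A \in V & exists a, M = block_mx A a 0 0.
Proof.
move=> [AV [dl dr]]; exists (ulsubmx M) => //; exists (ursubmx M).
by rewrite -dl -dr submxK.
Qed.

Lemma mulmx_tblock (A B : 'M[F]_n) (a b : 'cV[F]_n) :
  block_mx A a 0 0 *m block_mx B b 0 0 =
  block_mx (A *m B) (A *m b) 0 0 :> 'M_(n + 1).
Proof. by rewrite mulmx_block !mulmx0 !mul0mx !addr0. Qed.

Lemma lie_br_tblock (A B : 'M[F]_n) (a b : 'cV[F]_n) :
  lie_br (block_mx A a 0 0) (block_mx B b 0 0) =
  block_mx (A *m B - B *m A) (A *m b - B *m a) 0 0 :> 'M_(n + 1).
Proof.
by rewrite /lie_br !mulmx_tblock opp_block_mx add_block_mx !oppr0 !addr0.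
Qed.

Lemma lie_br_tilde_col (x y : 'M[F]_(n + 1)) :
  commuting_space V -> in_tilde V x -> in_tilde V y ->
  exists c, lie_br x y = block_mx 0 c 0 0.
Proof.
move=> cV /in_tildeP[A AV [a ->]] /in_tildeP[B BV [b ->]].
by rewrite lie_br_tblock (cV _ _ AV BV) subrr; eexists.
Qed.

Lemma tblock_col_lie_br (A : 'M[F]_n) (b : 'cV[F]_n) : A \in unitmx ->
  block_mx 0 b 0 0 = lie_br (block_mx A 0 0 0) (block_mx 0 (invmx A *m b) 0 0).
Proof. by move=> Au; rewrite lie_br_tblock !mul0mx !mulmx0 subrr subr0 mulKVmx. Qed.

Lemma tblock_split (A : 'M[F]_n) (a : 'cV[F]_n) :
  block_mx A a 0 0 = block_mx A 0 0 0 + block_mx 0 a 0 0 :> 'M_(n + 1).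
Proof. by rewrite add_block_mx !addr0 add0r. Qed.

End Tilde.

Section LieIsomorphism.
Variables (F : fieldType) (n n' : nat).
Variables (V : {vspace 'M[F]_n}) (V' : {vspace 'M[F]_n'}).
Hypotheses (cV : commuting_space V) (cV' : commuting_space V').
Variables (A0 : 'M[F]_n) (B0 : 'M[F]_n').
Hypotheses (A0V : A0 \in V) (A0u : A0 \in unitmx).
Hypotheses (B0V : B0 \in V') (B0u : B0 \in unitmx).
Variable f : {linear 'M[F]_(n + 1) -> 'M[F]_(n' + 1)}.
Hypothesis f_tilde : forall x, in_tilde V x -> in_tilde V' (f x).
Hypothesis f_inj :
  forall x y, in_tilde V x -> in_tilde V y -> f x = f y -> x = y.
Hypothesis f_surj :
  forall y, in_tilde V' y -> exists2 x, in_tilde V x & f x = y.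
Hypothesis f_lie_br : forall x y, in_tilde V x -> in_tilde V y ->
  f (lie_br x y) = lie_br (f x) (f y).

Definition ideal_mx : 'M[F]_(n', n) :=
  cV_mx (fun b => ursubmx (f (block_mx 0 b 0 0))).

Lemma f_col_tblock (b : 'cV[F]_n) :
  exists c, f (block_mx 0 b 0 0) = block_mx 0 c 0 0.
Proof.
rewrite (tblock_col_lie_br b A0u) f_lie_br;
  try by apply: in_tilde_block; rewrite ?mem0v.
apply: (lie_br_tilde_col cV'); apply: f_tilde.
  exact: in_tilde_block.
by apply: in_tilde_block; rewrite mem0v.
Qed.

Lemma f_col_tblockE (b : 'cV[F]_n) :
  f (block_mx 0 b 0 0) = block_mx 0 (ideal_mx *m b) 0 0.
Proof.
rewrite -cV_mxE => [|x y | a x].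
- by have [c ->] := f_col_tblock b; rewrite block_mxKur.
- have -> : block_mx 0 (x + y) 0 0 =
              block_mx 0 x 0 0 + block_mx 0 y 0 0 :> 'M_(n + 1).
    by rewrite add_block_mx !addr0.
  by rewrite /ursubmx !linearD.
- have -> : block_mx 0 (a *: x) 0 0 = a *: block_mx 0 x 0 0 :> 'M_(n + 1).
    by rewrite scale_block_mx !scaler0.
  by rewrite /ursubmx !linearZ.
Qed.

Lemma ideal_mx_inj (b : 'cV[F]_n) : ideal_mx *m b = 0 -> b = 0.
Proof.
move=> Sb0.
have := f_inj (in_tilde_block b (mem0v V)) (in_tilde_block 0 (mem0v V)).
by rewrite !f_col_tblockE Sb0 mulmx0 => /(_ erefl) /eq_block_mx[].
Qed.

Lemma ideal_mx_surj (c : 'cV[F]_n') : exists b, ideal_mx *m b = c.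
Proof.
have [x xt fx] := f_surj (in_tilde_block 0 B0V).
have [y yt fy] := f_surj (in_tilde_block (invmx B0 *m c) (mem0v V')).
have [b xyE] := lie_br_tilde_col cV xt yt.
exists b; have := f_lie_br xt yt.
by rewrite xyE f_col_tblockE fx fy -tblock_col_lie_br // => /eq_block_mx[].
Qed.

Lemma f_diag_tblock (A : 'M[F]_n) : A \in V ->
  exists2 A', A' \in V' &
    (exists a, f (block_mx A 0 0 0) = block_mx A' a 0 0)
    /\ A' *m ideal_mx = ideal_mx *m A.
Proof.
move=> AV; have [A' A'V [a fA]] := in_tildeP (f_tilde (in_tilde_block 0 AV)).
exists A' => //; split; first by exists a.
apply: mulmx_deltaP => j; set b := delta_mx j 0.
have := f_lie_br (in_tilde_block 0 AV) (in_tilde_block b (mem0v V)).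
rewrite fA f_col_tblockE !lie_br_tblock !mul0mx !mulmx0 !subr0 f_col_tblockE.
by case/eq_block_mx => _ E _ _; rewrite -!mulmxA E.
Qed.

Lemma lie_iso_intertwine (B : 'M[F]_n') :
  B \in V' <-> exists2 A : 'M[F]_n, A \in V & B *m ideal_mx = ideal_mx *m A.
Proof.
split=> [BV' | [A AV BS]].
  have [x xt fx] := f_surj (in_tilde_block 0 BV').
  have [A AV [a xE]] := in_tildeP xt; exists A => //.
  have [A' _ [[a' fA] <-]] := f_diag_tblock AV.
  move: fx; rewrite xE (tblock_split A a) linearD fA f_col_tblockE add_block_mx.
  by case/eq_block_mx; rewrite addr0 => ->.
have [A' A'V [_ A'S]] := f_diag_tblock AV.
have [R SR] := mx_cV_surj_rinv ideal_mx_surj.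
by rewrite -[B]mulmx1 -SR mulmxA BS -A'S -mulmxA SR mulmx1.
Qed.

End LieIsomorphism.

Lemma intertwining_similar (F : fieldType) (n n' : nat)
    (V : {vspace 'M[F]_n}) (V' : {vspace 'M[F]_n'}) (S : 'M[F]_(n', n)) :
  (forall b : 'cV_n, S *m b = 0 -> b = 0) ->
  (forall c : 'cV_n', exists b, S *m b = c) ->
  (forall B : 'M[F]_n',
     B \in V' <-> exists2 A : 'M[F]_n, A \in V & B *m S = S *m A) ->
  similar_spaces V V'.
Proof.
move=> injS surjS VS; have e := mx_cV_bij_dim injS surjS; subst n'.
have [R /mulmx1_unit[Su _]] := mx_cV_surj_rinv surjS.
exists erefl, S => // B; split=> [/VS[A AV BS] | [A AV ->]].
  by exists A; rewrite // castmx_id -BS mulmxK.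
by apply/VS; exists A; rewrite // castmx_id mulmxKV.
Qed.

Lemma lie_iso_similar (F : fieldType) (n n' : nat)
    (V : {vspace 'M[F]_n}) (V' : {vspace 'M[F]_n'}) :
  commuting_space V -> commuting_space V' ->
  has_nonsingular V -> has_nonsingular V' ->
  lie_isomorphic V V' -> similar_spaces V V'.
Proof.
move=> cV cV' [A0 A0V A0u] [B0 B0V B0u] [f [f_tilde f_inj f_surj f_lie_br]].
apply: (intertwining_similar (S := ideal_mx f)).
- exact: (ideal_mx_inj cV' A0V A0u f_tilde f_inj f_lie_br).
- exact: (ideal_mx_surj cV cV' A0V A0u B0V B0u f_tilde f_surj f_lie_br).
- exact: (lie_iso_intertwine cV cV' A0V A0u B0V B0u f_tilde f_surj f_lie_br).
Qed.

Lemma similar_tildes_lie_iso (F : fieldType) (n n' : nat)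
    (V : {vspace 'M[F]_n}) (V' : {vspace 'M[F]_n'}) :
  similar_tildes V V' -> lie_isomorphic V V'.
Proof.
move=> [e [R Ru VR]]; subst n'.
exists (mulmxr (invmx R) \o mulmx R); split=> /=.
- by move=> x xt; apply/VR; exists x; rewrite ?castmx_id.
- move=> x y _ _ /(congr1 (mulmx (invmx R) \o mulmxr R)) /=.
  by rewrite !mulmxKV // !mulKmx.
- by move=> y /VR[x xt ->]; exists x; rewrite ?castmx_id.
- by move=> x y _ _; rewrite /lie_br mulmxBr mulmxBl !mulmxA !mulmxKV.
Qed.

Lemma similar_spaces_tildes (F : fieldType) (n n' : nat)
    (V : {vspace 'M[F]_n}) (V' : {vspace 'M[F]_n'}) :
  similar_spaces V V' -> similar_tildes V V'.
Proof.
move=> [e [S Su VS]]; subst n'; exists erefl.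
pose R : 'M[F]_(n + 1) := block_mx S 0 0 1%:M.
have RV : R *m block_mx (invmx S) 0 0 1%:M = 1%:M.
  rewrite mulmx_block mulmxV // !mulmx0 !mul0mx !addr0 add0r mul1mx.
  by rewrite -scalar_mx_block.
have [Ru _] := mulmx1_unit RV.
have iR : invmx R = block_mx (invmx S) 0 0 1%:M.
  by rewrite -[invmx R]mulmx1 -RV mulmxA mulVmx // mul1mx.
have conjR (A : 'M[F]_n) a :
    R *m block_mx A a 0 0 *m invmx R = block_mx (S *m A *m invmx S) (S *m a) 0 0.
  by rewrite iR !mulmx_block !mulmx0 !mul0mx !addr0 !add0r !mulmx1 mul0mx.
exists R => // N.
split=> [/in_tildeP[B /VS[A AV ->] [b ->]] | [M /in_tildeP[A AV [a ->]] ->]].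
  exists (block_mx A (invmx S *m b) 0 0); first exact: in_tilde_block.
  by rewrite castmx_id conjR mulKVmx.
rewrite castmx_id conjR; apply: in_tilde_block.
by apply/VS; exists A; rewrite ?castmx_id.
Qed.

Theorem theorem2 (F : fieldType) (n n' : nat)
  (V : {vspace 'M[F]_n}) (V' : {vspace 'M[F]_n'}) :
  (exists x : F, x != 0 /\ x != 1) ->
  commuting_space V -> commuting_space V' ->
  has_nonsingular V -> has_nonsingular V' ->
  [/\ (lie_isomorphic V V' <-> similar_spaces V V'),
      (similar_spaces V V' <-> similar_tildes V V')
    & (lie_isomorphic V V' <-> similar_tildes V V')].
Proof.
move=> _ cV cV' hV hV'.
have i_ii := lie_iso_similar cV cV' hV hV'.
have ii_iii := @similar_spaces_tildes F n n' V V'.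
have iii_i := @similar_tildes_lie_iso F n n' V V'.
by split; split; auto.
Qed.
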